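(* Let $G$ be a finite graph with $n$ vertices such that $\mathrm{Aut}(G)$ is isomorphic to the dihedral group $D_t$ of order $2t$; write its elements as $\pi_{\rho^i}$ and $\pi_{\tau\rho^i}$, $i=0,\dots,t-1$, where $\pi_\rho$ has order $t$, $\pi_\tau^2=\pi_{\rho^0}$ is the identity, $\pi_{\tau}\pi_{\rho^i}=\pi_{\rho^{-i}}\pi_\tau$, and $\pi_{\tau\rho^i}=\pi_\tau\pi_{\rho^i}$. Let $t=\prod_{i=1}^s p_i^{r_i}$ be the prime factorization of $t$ and $P^*=\{\pi_{\rho^{t/p_1}},\dots,\pi_{\rho^{t/p_s}}\}$. Then for every positive integer $k$ and every $i\in\{0,\dots,t-1\}$, $$N_=(\{\pi_{\rho^0},\pi_{\tau\rho^i}\})=\sum_{\{\pi_{\tau\rho^i}\}\subseteq P\subseteq\{\pi_{\tau\rho^i}\}\cup P^*}(-1)^{|P|-1}N_{\ge}(P),$$ and $$L(G,k)=\sum_{P\subseteq P^*}(-1)^{|P|}N_{\ge}(P)-\sum_{i=0}^{t-1}N_=(\{\pi_{\rho^0},\pi_{\tau\rho^i}\}).$$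
   Context: A $k$-labeling of $G$ is a map $\phi:V(G)\to\{1,\dots,k\}$; an automorphism $\pi$ preserves $\phi$ if $\phi(\pi(v))=\phi(v)$ for all $v$; $\phi$ is distinguishing if only the identity preserves it; $L(G,k)$ is the number of distinguishing $k$-labelings. For $P\subseteq\mathrm{Aut}(G)$, $N_{\ge}(P)$ is the number of $k$-labelings preserved by every automorphism in $P$ (so $N_{\ge}(\emptyset)=k^n$), and $N_=(P)$ is the number of $k$-labelings whose set of preserving automorphisms is exactly $P$. *)

From mathcomp Require Import all_boot all_order all_algebra all_fingroup.
Set Implicit Arguments. Unset Strict Implicit. Unset Printing Implicit Defensive.

(* A finite simple graph: vertex type V : finType, adjacency e : rel V
   (symmetric, irreflexive, assumed in the theorem). *)

Definition AutG (V : finType) (e : rel V) : {set {perm V}} :=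
  [set s : {perm V} | [forall x, forall y, e (s x) (s y) == e x y]].

Definition labeling (V : finType) (k : nat) := {ffun V -> 'I_k}.

Definition preserves (V : finType) (k : nat) (s : {perm V}) (phi : labeling V k) : bool :=
  [forall v, phi (s v) == phi v].

Definition stab (V : finType) (e : rel V) (k : nat) (phi : labeling V k) : {set {perm V}} :=
  [set s in AutG e | preserves s phi].

Definition Nge (V : finType) (k : nat) (P : {set {perm V}}) : nat :=
  #|[set phi : labeling V k | [forall s in P, preserves s phi]]|.

Definition Neq (V : finType) (e : rel V) (k : nat) (P : {set {perm V}}) : nat :=
  #|[set phi : labeling V k | stab e phi == P]|.

Definition distinguishing (V : finType) (e : rel V) (k : nat) (phi : labeling V k) : bool :=
  stab e phi == [set 1%g].

Definition L (V : finType) (e : rel V) (k : nat) : nat :=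
  #|[set phi : labeling V k | distinguishing e phi]|.

From mathcomp Require Import all_boot all_order all_algebra all_fingroup cyclic zify.
Set Implicit Arguments. Unset Strict Implicit. Unset Printing Implicit Defensive.
Import GRing.Theory Num.Theory.
Local Open Scope ring_scope.

(* Let C = <[rho]>. Every nontrivial subgroup of the cyclic group C contains an element of
   prime order, and the subgroup of order p of C is generated by rho ^+ (t %/ p) in P^*; hence a
   labeling is fixed by no element of P^* iff it is fixed by no nontrivial rotation. The
   stabilizer of such a labeling is then either trivial or {1, sigma} for a single reflection
   sigma, since the quotient of two fixing reflections is a fixing rotation. Both identities
   follow by inclusion-exclusion over the subsets of P^*, the first one restricted to the
   labelings fixed by sigma. *)

Lemma sum_powerset_sign (T : finType) (S : {set T}) :
  \sum_(P in powerset S) (-1) ^+ #|P| = (S == set0)%:R :> int.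
Proof.
have [->|/set0Pn[x xS]] := eqVneq S set0.
  by rewrite powerset0 big_set1 cards0 expr0.
(* Toggling [x] is a sign-reversing involution on the subsets of [S]. *)
pose f (P : {set T}) := if x \in P then P :\ x else x |: P.
have fK : involutive f.
  move=> P; rewrite /f; case: (boolP (x \in P)) => xP.
    by rewrite setD11 setD1K.
  by rewrite setU11 setU1K.
have f_sign P : (-1) ^+ #|f P| = - (-1) ^+ #|P| :> int.
  rewrite /f; case: ifP => xP; last by rewrite cardsU1 xP exprS mulN1r.
  by rewrite [in RHS](cardsD1 x P) xP exprS mulN1r opprK.
have f_powerset P : (f P \in powerset S) = (P \in powerset S).
  rewrite /f !powersetE; case: ifP => [xP|_]; last by rewrite subUset sub1set xS.
  by rewrite -{2}(setD1K xP) subUset sub1set xS.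
set s := \sum_(P in _) _; have : s = - s.
  rewrite {1}/s (reindex_inj (inv_inj fK)) -sumrN /=.
  by apply: eq_big => P; rewrite ?f_powerset // => _; rewrite f_sign.
by move/eqP; rewrite -addr_eq0 -mulr2n mulrn_eq0 => /eqP.
Qed.

Lemma card_sumr (T : finType) (A : {pred T}) : #|A| = \sum_x (x \in A)%:R :> int.
Proof.
rewrite -natz -sumr_const big_mkcond; apply: eq_bigr => x _.
by case: (x \in A).
Qed.

Lemma inclusion_exclusion (X A : finType) (B : pred X) (R : X -> A -> bool) (Q : {set A}) :
  \sum_(P in powerset Q) (-1) ^+ #|P| * #|[set x | B x && [forall a in P, R x a]]|%:Z
    = #|[set x | B x && [forall a in Q, ~~ R x a]]|.
Proof.
rewrite card_sumr; under eq_bigr do rewrite card_sumr mulr_sumr.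
rewrite exchange_big; apply: eq_bigr => x _ /=; under eq_bigr do rewrite inE; rewrite inE.
case: (B x) => /=; last by rewrite big1 // => P _; rewrite mulr0.
pose Rx := Q :&: [set a | R x a].
have -> : [forall a in Q, ~~ R x a] = (Rx == set0).
  apply/forall_inP/eqP => [nR | Rx0 a aQ]; last first.
    by apply/negP => Ra; move/setP/(_ a): Rx0; rewrite !inE aQ Ra.
  by apply/setP => a; rewrite !inE; apply/andP => -[/nR/negP].
rewrite -sum_powerset_sign big_mkcond [RHS]big_mkcond; apply: eq_bigr => P _.
rewrite powersetI !inE; case: (P \subset Q) => //=.
have -> : [forall a in P, R x a] = (P \subset [set a | R x a]).
  by apply/forall_inP/subsetP => H a /H; rewrite inE.
by case: (P \subset [set a | R x a]); rewrite ?mulr1 ?mulr0.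
Qed.

Lemma big_powerset_setU1 (R : Type) (idx : R) (op : Monoid.com_law idx)
    (T : finType) (S : {set T}) (x : T) (F : {set T} -> R) :
  x \notin S ->
  \big[op/idx]_(P in powerset (x |: S) | x \in P) F P
    = \big[op/idx]_(P in powerset S) F (x |: P).
Proof.
move=> xS; have notin_sub P : P \in powerset S -> x \notin P.
  by rewrite powersetE => /subsetP sPS; apply: contra xS => /sPS.
rewrite -big_imset /=; last first.
  by move=> P1 P2 /notin_sub x1 /notin_sub x2 eq12; rewrite -(setU1K x1) -(setU1K x2) eq12.
apply: eq_bigl => P; apply/andP/imsetP => [[sPxS xP] | [P' P'S ->]].
  exists (P :\ x); last by rewrite setD1K.
  by rewrite powersetE subDset -powersetE.
by split; rewrite ?setU11 // !powersetE setUS // -powersetE.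
Qed.

Section PreservingGroup.
Variables (V : finType) (k : nat) (phi : labeling V k).

Definition preserving : {set {perm V}} := [set s | preserves s phi].

Lemma preserves1 : preserves 1 phi.
Proof. by apply/forallP => v; rewrite perm1. Qed.

Fact preserving_group_set : group_set preserving.
Proof.
apply/group_setP; split=> [|s u]; rewrite !inE ?preserves1 //.
move=> /forallP ps /forallP pu; apply/forallP => v.
by rewrite permM (eqP (pu _)) (eqP (ps _)).
Qed.

Canonical preserving_group := Group preserving_group_set.

Lemma stab_preserving (e : rel V) : stab e phi = AutG e :&: preserving.
Proof. by apply/setP => s; rewrite !inE. Qed.

Lemma stab1 (e : rel V) : 1%g \in stab e phi.
Proof. by rewrite !inE preserves1 andbT; apply/forallP => x; apply/forallP => y; rewrite !perm1. Qed.

End PreservingGroup.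

Lemma Nge_setU1 (V : finType) (k : nat) (s : {perm V}) (P : {set {perm V}}) :
  Nge k (s |: P)
    = #|[set phi : labeling V k | preserves s phi && [forall u in P, preserves u phi]]|.
Proof.
apply: eq_card => phi; rewrite !inE; apply/forall_inP/andP => [pP | [ps /forall_inP pP] u].
  by split; [|apply/forall_inP => u uP]; apply: pP; rewrite !inE ?eqxx ?uP ?orbT.
by rewrite !inE => /orP[/eqP -> | /pP].
Qed.

Lemma order_expg_div (gT : finGroupType) (a : gT) d :
  (d %| #[a]%g)%N -> #[a ^+ (#[a]%g %/ d)]%g = d.
Proof.
move=> d_a; have d_gt0 := dvdn_gt0 (order_gt0 a) d_a.
by rewrite orderXdiv ?dvdn_div // divnA // mulKn.
Qed.

Section CyclicGroup.
Variables (gT : finGroupType) (a : gT).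
Local Open Scope group_scope.

Lemma expg_ord_mulg_inj (b : gT) :
  injective (fun i : 'I_#[a] => a ^+ i * b).
Proof.
move=> i j /mulIg/eqP; rewrite eq_expg_mod_order !modn_small // => /eqP.
exact: val_inj.
Qed.

Lemma cycle_expg_ord : [set a ^+ i | i : 'I_#[a]] = <[a]>.
Proof.
apply/setP => x; apply/imsetP/idP => [[i _ ->] | /cyclePmin[i lt_ia ->]].
  exact: mem_cycle.
by exists (Ordinal lt_ia).
Qed.

Definition prime_rotations : {set gT} :=
  [set:: [seq a ^+ (#[a] %/ p) | p <- primes #[a]]].

Lemma prime_rotations_sub : prime_rotations \subset <[a]>^#.
Proof.
apply/subsetP => s; rewrite inE => /mapP[p p_a ->]; rewrite !inE mem_cycle andbT.
move: p_a; rewrite mem_primes => /and3P[p_pr _ p_a].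
by rewrite -order_gt1 order_expg_div // prime_gt1.
Qed.

(* Any nontrivial [x] in [<[a]>] has some prime order [p]; [<[x]>] then contains the unique
   subgroup of order [p] of [<[a]>]. *)
Lemma cycle_prime_rotation x :
  x \in <[a]>^# -> exists2 s, s \in prime_rotations & s \in <[x]>.
Proof.
case/setD1P => x1 x_a; set p := pdiv #[x].
have x_dvd_a : (#[x] %| #[a])%N by rewrite orderE order_dvdG.
have p_pr : prime p by rewrite pdiv_prime // order_gt1.
have p_x : (p %| #[x])%N := pdiv_dvd _.
have p_a : (p %| #[a])%N := dvdn_trans p_x x_dvd_a.
exists (a ^+ (#[a] %/ p)).
  by rewrite inE; apply/mapP; exists p; rewrite // mem_primes p_pr order_gt0.
have : <[x ^+ (#[x] %/ p)]> == <[a ^+ (#[a] %/ p)]> :> {set gT}.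
  rewrite (eq_subG_cyclic (cycle_cyclic a)) ?cycle_subG ?mem_cycle ?groupX //.
  by change (#[x ^+ (#[x] %/ p)] == #[a ^+ (#[a] %/ p)])%N; rewrite !order_expg_div.
by move/eqP => eq_cyc; apply: (subsetP (cycleX x (#[x] %/ p))); rewrite eq_cyc cycle_id.
Qed.

End CyclicGroup.

Section DihedralAutomorphisms.
Variables (V : finType) (e : rel V) (rho tau : {perm V}).
Local Open Scope group_scope.
Local Notation t := #[rho].
Local Notation sigma i := (rho ^+ i * tau)%g.

Hypothesis Aut_eq :
  AutG e = [set rho ^+ i | i : 'I_t] :|: [set sigma i | i : 'I_t].
Hypothesis Aut_card : #|AutG e| = (2 * t)%N.

Lemma AutG_dihedral : AutG e = <[rho]> :|: [set sigma i | i : 'I_t].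
Proof. by rewrite Aut_eq cycle_expg_ord. Qed.

Lemma cycle_sub_Aut : <[rho]> \subset AutG e.
Proof. by rewrite AutG_dihedral subsetUl. Qed.

Lemma reflection_Aut (i : 'I_t) : sigma i \in AutG e.
Proof. by rewrite AutG_dihedral inE; apply/orP; right; apply/imsetP; exists i. Qed.

(* [AutG e] has [2 t] elements, so its two halves, of at most [t] elements each, are disjoint. *)
Lemma tau_notin_cycle : tau \notin <[rho]>.
Proof.
set R := [set sigma i | i : 'I_t].
have card_R : (#|R| <= t)%N by rewrite (leq_trans (leq_imset_card _ _)) ?card_ord.
have := cardsUI <[rho]> R; rewrite -AutG_dihedral Aut_card -orderE.
set I := <[rho]> :&: R; set r := #|R| in card_R * => card_U.
have /eqP : #|I| = 0%N by lia.
rewrite cards_eq0 => /eqP/setP/(_ tau).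
rewrite !inE => /negbT; apply: contra => tau_rho.
by rewrite tau_rho; apply/imsetP; exists (Ordinal (order_gt0 rho)); rewrite ?mul1g.
Qed.

Lemma reflection_notin_cycle j : sigma j \notin <[rho]>.
Proof. by rewrite groupMl ?mem_cycle ?tau_notin_cycle. Qed.

Variable k : nat.
Local Notation rot_free phi := [forall s in prime_rotations rho, ~~ preserves s phi].

Lemma rot_freeP (phi : labeling V k) :
  reflect (preserving phi :&: <[rho]> \subset [set 1]) (rot_free phi).
Proof.
apply: (iffP forall_inP) => [no_rot | triv s s_rot].
  apply/subsetP => x; rewrite !inE => /andP[px x_rho]; apply/negPn/negP => x1.
  have [s s_rot s_x] : exists2 s, s \in prime_rotations rho & s \in <[x]>.
    by apply: cycle_prime_rotation; rewrite !inE x1.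
  have : s \in preserving phi by apply: subsetP s_x; rewrite cycle_subG inE.
  by rewrite inE; apply/negP/no_rot.
have /setD1P[s1 s_rho] := subsetP (prime_rotations_sub rho) s s_rot.
by apply: contra s1 => ps; have := subsetP triv s; rewrite !inE ps s_rho => /(_ isT).
Qed.

Lemma rot_free_stab (phi : labeling V k) :
  rot_free phi = (stab e phi :&: <[rho]> \subset [set 1]).
Proof.
rewrite stab_preserving setIAC (setIidPr cycle_sub_Aut) setIC.
exact/rot_freeP/idP.
Qed.

Lemma rot_free_cycle (phi : labeling V k) s :
  rot_free phi -> s \in stab e phi -> s \in <[rho]> -> s = 1.
Proof.
by rewrite rot_free_stab => /subsetP triv s_stab s_rho; apply/set1P/triv; rewrite inE s_stab.
Qed.

Lemma preserved_reflection_unique (phi : labeling V k) (i j : 'I_t) :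
  rot_free phi -> preserves (sigma i) phi -> preserves (sigma j) phi -> i = j.
Proof.
move=> /rot_freeP/subsetP triv pi pj.
have : sigma i * (sigma j)^-1 \in preserving phi :&: <[rho]>.
  rewrite inE groupM ?groupV ?inE // invMg mulgA mulgK.
  by rewrite groupM ?groupV ?mem_cycle.
move/triv; rewrite inE -eq_mulgV1 => /eqP.
exact: expg_ord_mulg_inj.
Qed.

Lemma stab_eq_reflection (phi : labeling V k) (i : 'I_t) :
  (stab e phi == [set 1; sigma i]) = preserves (sigma i) phi && rot_free phi.
Proof.
apply/eqP/andP => [stab_i | [p_i rf]].
  have : sigma i \in stab e phi by rewrite stab_i !inE eqxx orbT.
  rewrite inE => /andP[_ ->]; split => //.
  rewrite rot_free_stab stab_i; apply/subsetP => s; rewrite !inE.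
  by case/andP => /orP[-> // | /eqP ->]; rewrite (negbTE (reflection_notin_cycle i)).
apply/setP => s; apply/idP/set2P => [s_stab | [-> | ->]]; last 2 first.
- exact: stab1.
- by rewrite inE reflection_Aut.
have := s_stab; rewrite inE AutG_dihedral inE => /andP[/orP[s_rho _ | /imsetP[j _ ->] p_j]].
  by left; exact: rot_free_cycle rf s_stab s_rho.
by right; rewrite (preserved_reflection_unique rf p_j p_i).
Qed.

Lemma rot_free_indicator (phi : labeling V k) :
  ((rot_free phi)%:R = (distinguishing e phi)%:R
     + \sum_(i < t) (stab e phi == [set 1%g; sigma i])%:R :> int)%R.
Proof.
have dist_rf : distinguishing e phi -> rot_free phi.
  by rewrite rot_free_stab => /eqP->; rewrite subsetIl.
have [rf | nrf] := boolP (rot_free phi); last first.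
  rewrite big1 => [|i _]; last by rewrite stab_eq_reflection (negbTE nrf) andbF.
  by rewrite (contraNF dist_rf nrf) addr0.
have [j p_j | no_refl] := pickP (fun j : 'I_t => preserves (sigma j) phi).
  rewrite (bigD1 j) //= stab_eq_reflection p_j rf big1 => [|i ij]; last first.
    rewrite stab_eq_reflection rf andbT; case: (boolP (preserves (sigma i) phi)) => // p_i.
    by rewrite (preserved_reflection_unique rf p_i p_j) eqxx in ij.
  suff -> : distinguishing e phi = false by rewrite add0r addr0.
  apply/negP => /eqP stab_1; have : sigma j \in stab e phi by rewrite inE reflection_Aut.
  by rewrite stab_1 inE => /eqP sigma_1; move: (reflection_notin_cycle j); rewrite sigma_1 group1.
rewrite big1 => [|i _]; last by rewrite stab_eq_reflection no_refl.
suff -> : distinguishing e phi by rewrite addr0.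
apply/eqP/setP => s; apply/idP/set1P => [s_stab | ->]; last exact: stab1.
have := s_stab; rewrite inE AutG_dihedral inE => /andP[/orP[s_rho _ | /imsetP[j _ ->]]].
  exact: rot_free_cycle rf s_stab s_rho.
by rewrite no_refl.
Qed.

Lemma Neq_reflection (i : 'I_t) :
  (Neq e k [set 1%g; sigma i] = \sum_(P in powerset (sigma i |: prime_rotations rho) | sigma i \in P)
     (-1) ^+ #|P|.-1 * (Nge k P)%:Z :> int)%R.
Proof.
have sigma_notin : sigma i \notin prime_rotations rho.
  by apply: contra (reflection_notin_cycle i) => /(subsetP (prime_rotations_sub rho))/setD1P[].
rewrite big_powerset_setU1 //.
transitivity (#|[set phi : labeling V k | preserves (sigma i) phi && rot_free phi]| : int).
  by rewrite /Neq; congr Posz; apply: eq_card => phi; rewrite !inE stab_eq_reflection.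
rewrite -inclusion_exclusion; apply: eq_bigr => P; rewrite powersetE => P_sub.
have i_notin_P : sigma i \notin P by apply: contra sigma_notin; apply: subsetP.
by rewrite cardsU1 i_notin_P Nge_setU1.
Qed.

Lemma sum_Nge_prime_rotations :
  (\sum_(P in powerset (prime_rotations rho)) (-1) ^+ #|P| * (Nge k P)%:Z
     = (L e k)%:Z + \sum_(i < t) (Neq e k [set 1%g; sigma i])%:Z)%R.
Proof.
transitivity (#|[set phi : labeling V k | rot_free phi]| : int).
  exact: (inclusion_exclusion predT (fun (phi : labeling V k) s => preserves s phi)).
rewrite /L /Neq; under [X in _ + X]eq_bigr do rewrite card_sumr.
rewrite !card_sumr exchange_big -big_split; apply: eq_bigr => phi _.
by rewrite !inE rot_free_indicator; under [in RHS]eq_bigr do rewrite inE.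
Qed.

End DihedralAutomorphisms.

Theorem theorem3 (V : finType) (e : rel V)
  (e_sym : symmetric e) (e_irr : irreflexive e)
  (t : nat) (rho tau : {perm V})
  (rho_aut : rho \in AutG e) (tau_aut : tau \in AutG e)
  (rho_ord : #[rho]%g = t)
  (tau_inv : (tau ^+ 2)%g = 1%g)
  (tau_rho : forall i : nat, (rho ^+ i * tau)%g = (tau * rho ^- i)%g)
  (Aut_eq : AutG e = [set (rho ^+ i)%g | i : 'I_t] :|: [set (rho ^+ i * tau)%g | i : 'I_t])
  (Aut_card : #|AutG e| = (2 * t)%N) :
  let Pstar : {set {perm V}} := [set:: [seq (rho ^+ (t %/ p))%g | p <- primes t]] in
  forall k : nat, (0 < k)%N ->
  (forall i : nat, (i < t)%N ->
     let sigma := (rho ^+ i * tau)%g in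
     (Neq e k [set 1%g; sigma] : int) =
       \sum_(P in powerset (sigma |: Pstar) | sigma \in P)
          (-1) ^+ (#|P|.-1) * (Nge k P : int))
  /\
  (L e k : int) =
     \sum_(P in powerset Pstar) (-1) ^+ #|P| * (Nge k P : int)
     - \sum_(i < t) (Neq e k [set 1%g; (rho ^+ i * tau)%g] : int).
Proof.
subst t => Pstar k _; split => [i lt_i | ].
  exact: (Neq_reflection Aut_eq Aut_card k (Ordinal lt_i)).
by rewrite /Pstar (sum_Nge_prime_rotations Aut_eq Aut_card) addrK.
Qed.
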